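(* (Weak progress for $\lambda_{\mathrm{act}}$ configurations.) Let $\cdot ; \cdot \vdash \mathcal{C}$, suppose $\mathcal{C}$ cannot reduce (there is no $\mathcal{C}'$ with $\mathcal{C}\longrightarrow\mathcal{C}'$), and let $\mathcal{C}' = (\nu a_1) \ldots (\nu a_n)(\langle a_1, M_1, \vec V_1\rangle \parallel \ldots \parallel \langle a_n, M_n, \vec V_n\rangle)$ be a canonical form of $\mathcal{C}$. Then each actor with name $a_i$ is either of the form $\langle a_i, \mathbf{return}\ W, \vec V_i\rangle$ for some value $W$, or of the form $\langle a_i, E[\mathbf{receive}], \epsilon\rangle$ for some evaluation context $E$.
   Context: The calculus $\lambda_{\mathrm{act}}$. Types $A,B,C ::= \mathbf{1} \mid A \xrightarrow{C} B \mid \mathsf{ActorRef}(A)$; $\alpha$ ranges over variables and names; values $V,W ::= \alpha \mid \lambda x.M \mid ()$; computations $M,N ::= V\,W \mid \mathbf{let}\ x \Leftarrow M\ \mathbf{in}\ N \mid \mathbf{return}\ V \mid \mathbf{spawn}\ M \mid \mathbf{send}\ V\ W \mid \mathbf{receive} \mid \mathbf{self}$. Value typing: $\Gamma\vdash\alpha:A$ if $\alpha:A\in\Gamma$; $\Gamma\vdash\lambda x.M:A\xrightarrow{C}B$ if $\Gamma,x:A\mid C\vdash M:B$; $\Gamma\vdash():\mathbf 1$. Computation typing $\Gamma\mid C\vdash M:A$: $V\,W:B$ if $\Gamma\vdash V:A\xrightarrow{C}B$, $\Gamma\vdash W:A$; $\Gamma\mid C\vdash\mathbf{let}\ x\Leftarrow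 M\ \mathbf{in}\ N:B$ if $\Gamma\mid C\vdash M:A$, $\Gamma,x:A\mid C\vdash N:B$; $\Gamma\mid C\vdash\mathbf{return}\ V:A$ if $\Gamma\vdash V:A$; $\Gamma\mid C\vdash\mathbf{send}\ V\ W:\mathbf 1$ if $\Gamma\vdash V:A$, $\Gamma\vdash W:\mathsf{ActorRef}(A)$; $\Gamma\mid A\vdash\mathbf{receive}:A$; $\Gamma\mid C\vdash\mathbf{spawn}\ M:\mathsf{ActorRef}(A)$ if $\Gamma\mid A\vdash M:\mathbf 1$; $\Gamma\mid A\vdash\mathbf{self}:\mathsf{ActorRef}(A)$. Evaluation contexts $E ::= [\,]\mid\mathbf{let}\ x\Leftarrow E\ \mathbf{in}\ M$; term reduction: $(\lambda x.M)V\longrightarrow_{\mathsf{M}} M\{V/x\}$, $\mathbf{let}\ x\Leftarrow\mathbf{return}\ V\ \mathbf{in}\ M\longrightarrow_{\mathsf{M}} M\{V/x\}$, $E[M]\longrightarrow_{\mathsf{M}}E[M']$ if $M\longrightarrow_{\mathsf{M}}M'$. Configurations $\mathcal{C},\mathcal{D} ::= \mathcal{C}\parallel\mathcal{D}\mid(\nu a)\mathcal{C}\mid\langle a,M,\vec V\rangle$ (actor named $a$ evaluating $M$ with mailbox $\vec V$; $\epsilon$ empty). Configuration contexts $G ::= [\,]\mid G\parallel\mathcal{C}\mid(\nu a)G$. Configuration typing: (Par) $\Gamma;\Delta_1\vdash\mathcal{C}_1$, $\Gamma;\Delta_2\vdash\mathcal{C}_2$ give $\Gamma;\Delta_1,\Delta_2\vdash\mathcal{C}_1\parallel\mathcal{C}_2$;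 (Pid) $\Gamma,a:\mathsf{ActorRef}(A);\Delta,a:A\vdash\mathcal{C}$ gives $\Gamma;\Delta\vdash(\nu a)\mathcal{C}$; (Actor) $\Gamma,a:\mathsf{ActorRef}(A)\mid A\vdash M:\mathbf 1$ and $\Gamma,a:\mathsf{ActorRef}(A)\vdash V_i:A$ for all $i$ give $\Gamma,a:\mathsf{ActorRef}(A);a:A\vdash\langle a,M,\vec V\rangle$. Structural congruence $\equiv$: least congruence closed under $G[-]$ with commutativity/associativity of $\parallel$ and $\mathcal{C}\parallel(\nu a)\mathcal{D}\equiv(\nu a)(\mathcal{C}\parallel\mathcal{D})$ if $a\notin\mathsf{fv}(\mathcal{C})$. Reduction $\longrightarrow$ (modulo $\equiv$): $\langle a,E[\mathbf{spawn}\ M],\vec V\rangle\longrightarrow(\nu b)(\langle a,E[\mathbf{return}\ b],\vec V\rangle\parallel\langle b,M,\epsilon\rangle)$, $b$ fresh; $\langle a,E[\mathbf{send}\ V'\ b],\vec V\rangle\parallel\langle b,M,\vec W\rangle\longrightarrow\langle a,E[\mathbf{return}\ ()],\vec V\rangle\parallel\langle b,M,\vec W\cdot V'\rangle$; $\langle a,E[\mathbf{send}\ V'\ a],\vec V\rangle\longrightarrow\langle a,E[\mathbf{return}\ ()],\vec V\cdot V'\rangle$; $\langle a,E[\mathbf{self}],\vec V\rangle\longrightarrow\langle a,E[\mathbf{return}\ a],\vec V\rangle$; $\langle a,E[\mathbf{receive}],W\cdot\vec V\rangle\longrightarrow\langle a,E[\mathbf{return}\ W],\vec V\rangle$; $G[\mathcal{C}_1]\longrightarrow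 G[\mathcal{C}_2]$ if $\mathcal{C}_1\longrightarrow\mathcal{C}_2$; $\langle a,M_1,\vec V\rangle\longrightarrow\langle a,M_2,\vec V\rangle$ if $M_1\longrightarrow_{\mathsf{M}}M_2$. A canonical form of $\mathcal{C}$ is a configuration $\mathcal{C}'\equiv\mathcal{C}$ of the form $(\nu a_1) \ldots (\nu a_n)(\langle a_1, M_1, \vec V_1\rangle \parallel \ldots \parallel \langle a_n, M_n, \vec V_n\rangle)$. *)

From Stdlib Require Import Arith List Permutation.
Import ListNotations.

Inductive ty : Type :=
| TUnit : ty
| TFun : ty -> ty -> ty -> ty   (* TFun A C B  =  A -{C}-> B *)
| TRef : ty -> ty.

(* Values and computations. Variables are de Bruijn indices; names are nats. *)
Inductive val : Type :=
| VVar : nat -> val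
| VName : nat -> val
| VLam : comp -> val
| VUnit : val
with comp : Type :=
| CApp : val -> val -> comp
| CLet : comp -> comp -> comp (* let x <= M in N, x is index 0 in N *)
| CRet : val -> comp
| CSpawn : comp -> comp
| CSend : val -> val -> comp
| CRecv : comp
| CSelf : comp.

(* Name environments (the name part of Gamma). *)
Definition nenv := nat -> option ty.
Definition nempty : nenv := fun _ => None.
Definition nupd (G : nenv) (a : nat) (T : ty) : nenv :=
  fun b => if Nat.eqb b a then Some T else G b.

Inductive vtyp (G : nenv) (L : list ty) : val -> ty -> Prop :=
| vt_var : forall n A, nth_error L n = Some A -> vtyp G L (VVar n) A
| vt_name : forall a A, G a = Some A -> vtyp G L (VName a) A
| vt_lam : forall M A C B, ctyp G (A :: L) C M B -> vtyp G L (VLam M) (TFun A C B)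
| vt_unit : vtyp G L VUnit TUnit
with ctyp (G : nenv) (L : list ty) : ty -> comp -> ty -> Prop :=
| ct_app : forall V W A C B,
    vtyp G L V (TFun A C B) -> vtyp G L W A -> ctyp G L C (CApp V W) B
| ct_let : forall C M N A B,
    ctyp G L C M A -> ctyp G (A :: L) C N B -> ctyp G L C (CLet M N) B
| ct_ret : forall C V A, vtyp G L V A -> ctyp G L C (CRet V) A
| ct_send : forall C V W A,
    vtyp G L V A -> vtyp G L W (TRef A) -> ctyp G L C (CSend V W) TUnit
| ct_recv : forall A, ctyp G L A CRecv A
| ct_spawn : forall C M A, ctyp G L A M TUnit -> ctyp G L C (CSpawn M) (TRef A)
| ct_self : forall A, ctyp G L A CSelf (TRef A).

Fixpoint lift_v (c : nat) (v : val) : val :=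
  match v with
  | VVar n => if n <? c then VVar n else VVar (S n)
  | VName a => VName a
  | VLam M => VLam (lift_c (S c) M)
  | VUnit => VUnit
  end
with lift_c (c : nat) (M : comp) : comp :=
  match M with
  | CApp V W => CApp (lift_v c V) (lift_v c W)
  | CLet M N => CLet (lift_c c M) (lift_c (S c) N)
  | CRet V => CRet (lift_v c V)
  | CSpawn M => CSpawn (lift_c c M)
  | CSend V W => CSend (lift_v c V) (lift_v c W)
  | CRecv => CRecv
  | CSelf => CSelf
  end.

Fixpoint subst_v (j : nat) (W : val) (v : val) : val :=
  match v with
  | VVar n => if n =? j then W else if j <? n then VVar (pred n) else VVar n
  | VName a => VName a
  | VLam M => VLam (subst_c (S j) (lift_v 0 W) M)
  | VUnit => VUnit
  end
with subst_c (j : nat) (W : val) (M : comp) : comp :=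
  match M with
  | CApp V1 V2 => CApp (subst_v j W V1) (subst_v j W V2)
  | CLet M N => CLet (subst_c j W M) (subst_c (S j) (lift_v 0 W) N)
  | CRet V => CRet (subst_v j W V)
  | CSpawn M => CSpawn (subst_c j W M)
  | CSend V1 V2 => CSend (subst_v j W V1) (subst_v j W V2)
  | CRecv => CRecv
  | CSelf => CSelf
  end.

Inductive ectx : Type :=
| EHole : ectx
| ELet : ectx -> comp -> ectx.

Fixpoint plug (E : ectx) (M : comp) : comp :=
  match E with
  | EHole => M
  | ELet E' N => CLet (plug E' M) N
  end.

Inductive mstep : comp -> comp -> Prop :=
| ms_beta : forall M V, mstep (CApp (VLam M) V) (subst_c 0 V M)
| ms_let : forall V N, mstep (CLet (CRet V) N) (subst_c 0 V N)
| ms_ctx : forall E M M', mstep M M' -> mstep (plug E M) (plug E M').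

Inductive config : Type :=
| KPar : config -> config -> config
| KNu : nat -> config -> config
| KActor : nat -> comp -> list val -> config.

(* Names occurring in terms (terms have no name binders). *)
Fixpoint names_v (v : val) : list nat :=
  match v with
  | VVar _ => []
  | VName a => [a]
  | VLam M => names_c M
  | VUnit => []
  end
with names_c (M : comp) : list nat :=
  match M with
  | CApp V W => names_v V ++ names_v W
  | CLet M N => names_c M ++ names_c N
  | CRet V => names_v V
  | CSpawn M => names_c M
  | CSend V W => names_v V ++ names_v W
  | CRecv => []
  | CSelf => []
  end.

Fixpoint fn_conf (C : config) : list nat :=
  match C with
  | KPar C1 C2 => fn_conf C1 ++ fn_conf C2
  | KNu a C' => filter (fun x => negb (Nat.eqb x a)) (fn_conf C')
  | KActor a M mb => a :: names_c M ++ flat_map names_v mb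
  end.

Fixpoint all_names (C : config) : list nat :=
  match C with
  | KPar C1 C2 => all_names C1 ++ all_names C2
  | KNu a C' => a :: all_names C'
  | KActor a M mb => a :: names_c M ++ flat_map names_v mb
  end.

Definition ren (a b c : nat) : nat := if Nat.eqb c a then b else c.

Fixpoint rename_v (a b : nat) (v : val) : val :=
  match v with
  | VVar n => VVar n
  | VName c => VName (ren a b c)
  | VLam M => VLam (rename_c a b M)
  | VUnit => VUnit
  end
with rename_c (a b : nat) (M : comp) : comp :=
  match M with
  | CApp V W => CApp (rename_v a b V) (rename_v a b W)
  | CLet M N => CLet (rename_c a b M) (rename_c a b N)
  | CRet V => CRet (rename_v a b V)
  | CSpawn M => CSpawn (rename_c a b M)
  | CSend V W => CSend (rename_v a b V) (rename_v a b W)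
  | CRecv => CRecv
  | CSelf => CSelf
  end.

Fixpoint rename_conf (a b : nat) (C : config) : config :=
  match C with
  | KPar C1 C2 => KPar (rename_conf a b C1) (rename_conf a b C2)
  | KNu c C' => if Nat.eqb c a then KNu c C' else KNu c (rename_conf a b C')
  | KActor c M mb => KActor (ren a b c) (rename_c a b M) (map (rename_v a b) mb)
  end.

(* Configuration typing  G ; D |- C   (D a linear list of name:mailbox type) *)
Inductive ktyp : nenv -> list (nat * ty) -> config -> Prop :=
| kt_par : forall G D D1 D2 C1 C2,
    ktyp G D1 C1 -> ktyp G D2 C2 -> Permutation D (D1 ++ D2) ->
    ktyp G D (KPar C1 C2)
| kt_pid : forall G D a A C,
    ktyp (nupd G a (TRef A)) ((a, A) :: D) C -> ktyp G D (KNu a C)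
| kt_actor : forall G a A M mb,
    G a = Some (TRef A) ->
    ctyp G [] A M TUnit ->
    (forall V, In V mb -> vtyp G [] V A) ->
    ktyp G [(a, A)] (KActor a M mb).

Inductive scong : config -> config -> Prop :=
| sc_refl : forall C, scong C C
| sc_sym : forall C D, scong C D -> scong D C
| sc_trans : forall C D E, scong C D -> scong D E -> scong C E
| sc_comm : forall C D, scong (KPar C D) (KPar D C)
| sc_assoc : forall C D E, scong (KPar C (KPar D E)) (KPar (KPar C D) E)
| sc_extr : forall C D a, ~ In a (fn_conf C) ->
    scong (KPar C (KNu a D)) (KNu a (KPar C D))
| sc_alpha : forall a b C, ~ In b (all_names C) ->
    scong (KNu a C) (KNu b (rename_conf a b C))
| sc_ctx_par : forall C C' D, scong C C' -> scong (KPar C D) (KPar C' D)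
| sc_ctx_nu : forall a C C', scong C C' -> scong (KNu a C) (KNu a C').

(* Configuration reduction (before closing under structural congruence). *)
Inductive kstep0 : config -> config -> Prop :=
| ks_spawn : forall a E M mb b,
    ~ In b (fn_conf (KActor a (plug E (CSpawn M)) mb)) ->
    kstep0 (KActor a (plug E (CSpawn M)) mb)
           (KNu b (KPar (KActor a (plug E (CRet (VName b))) mb) (KActor b M [])))
| ks_send : forall a E V' b mb M mbb,
    kstep0 (KPar (KActor a (plug E (CSend V' (VName b))) mb) (KActor b M mbb))
           (KPar (KActor a (plug E (CRet VUnit)) mb) (KActor b M (mbb ++ [V'])))
| ks_send_self : forall a E V' mb,
    kstep0 (KActor a (plug E (CSend V' (VName a))) mb)
           (KActor a (plug E (CRet VUnit)) (mb ++ [V']))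
| ks_self : forall a E mb,
    kstep0 (KActor a (plug E CSelf) mb) (KActor a (plug E (CRet (VName a))) mb)
| ks_recv : forall a E W mb,
    kstep0 (KActor a (plug E CRecv) (W :: mb)) (KActor a (plug E (CRet W)) mb)
| ks_ctx_par : forall C1 C2 D, kstep0 C1 C2 -> kstep0 (KPar C1 D) (KPar C2 D)
| ks_ctx_nu : forall a C1 C2, kstep0 C1 C2 -> kstep0 (KNu a C1) (KNu a C2)
| ks_term : forall a M1 M2 mb, mstep M1 M2 -> kstep0 (KActor a M1 mb) (KActor a M2 mb).

Definition kstep (C D : config) : Prop :=
  exists C' D', scong C C' /\ kstep0 C' D' /\ scong D' D.

(* Canonical forms: (nu a1)...(nu an)(<a1,M1,V1> || ... || <an,Mn,Vn>), n >= 1 *)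
Definition actor_of (x : nat * comp * list val) : config :=
  let '(a, M, mb) := x in KActor a M mb.

Fixpoint par_of (x : nat * comp * list val) (l : list (nat * comp * list val)) : config :=
  match l with
  | [] => actor_of x
  | y :: l' => KPar (actor_of x) (par_of y l')
  end.

Definition nus (ns : list nat) (C : config) : config :=
  fold_right KNu C ns.

Definition canon (x : nat * comp * list val) (l : list (nat * comp * list val)) : config :=
  nus (map (fun y => fst (fst y)) (x :: l)) (par_of x l).

(* Structural congruence preserves the free names of a configuration and, for
   a typing discipline that lets a name stand for a reference of any type, the
   well-typedness of every actor body. So each actor of the canonical form runs
   a closed well-typed computation, which by progress for terms is a value or
   E[R] with R a redex. Every redex fires except receive on an empty mailbox:
   application, let, spawn, self and a send to oneself locally, and a send to
   another name b jointly with the actor b, which exists because the typed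
   configuration is closed, so b is bound by the canonical prefix. *)
From Stdlib Require Import List Arith Lia.
Import ListNotations.

(* Names are typed as arbitrary references, without a name environment: this
   typing is invariant under the alpha-renaming allowed by [scong]. *)
Inductive vtypR (L : list ty) : val -> ty -> Prop :=
| vtR_var : forall n A, nth_error L n = Some A -> vtypR L (VVar n) A
| vtR_name : forall a A, vtypR L (VName a) (TRef A)
| vtR_lam : forall M A C B, ctypR (A :: L) C M B -> vtypR L (VLam M) (TFun A C B)
| vtR_unit : vtypR L VUnit TUnit
with ctypR (L : list ty) : ty -> comp -> ty -> Prop :=
| ctR_app : forall V W A C B,
    vtypR L V (TFun A C B) -> vtypR L W A -> ctypR L C (CApp V W) B
| ctR_let : forall C M N A B,
    ctypR L C M A -> ctypR (A :: L) C N B -> ctypR L C (CLet M N) B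
| ctR_ret : forall C V A, vtypR L V A -> ctypR L C (CRet V) A
| ctR_send : forall C V W A,
    vtypR L V A -> vtypR L W (TRef A) -> ctypR L C (CSend V W) TUnit
| ctR_recv : forall A, ctypR L A CRecv A
| ctR_spawn : forall C M A, ctypR L A M TUnit -> ctypR L C (CSpawn M) (TRef A)
| ctR_self : forall A, ctypR L A CSelf (TRef A).

Scheme vtypR_mut := Induction for vtypR Sort Prop
with ctypR_mut := Induction for ctypR Sort Prop.
Combined Scheme typR_mutind from vtypR_mut, ctypR_mut.

Scheme vtyp_mut := Induction for vtyp Sort Prop
with ctyp_mut := Induction for ctyp Sort Prop.
Combined Scheme typ_mutind from vtyp_mut, ctyp_mut.

Scheme val_mut := Induction for val Sort Prop
with comp_mut := Induction for comp Sort Prop.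
Combined Scheme term_mutind from val_mut, comp_mut.

Definition nenv_refs (G : nenv) : Prop :=
  forall n T, G n = Some T -> exists A, T = TRef A.

Lemma typ_typR G L : nenv_refs G ->
  (forall V T, vtyp G L V T -> vtypR L V T) /\
  (forall A M B, ctyp G L A M B -> ctypR L A M B).
Proof.
  intro HG; revert L; apply typ_mutind; intros; try (econstructor; eauto; fail).
  match goal with H : G _ = Some _ |- _ => destruct (HG _ _ H) as [A' ->] end.
  constructor.
Qed.

Lemma typ_names G n L :
  (forall V T, vtyp G L V T -> In n (names_v V) -> G n <> None) /\
  (forall A M B, ctyp G L A M B -> In n (names_c M) -> G n <> None).
Proof.
  revert L; apply typ_mutind; simpl; intros; rewrite ?in_app_iff in *; try tauto.
  match goal with H : _ = n \/ False |- _ => destruct H as [<- | []] end. congruence.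
Qed.

Lemma typR_rename a b L :
  (forall V T, vtypR L V T -> vtypR L (rename_v a b V) T) /\
  (forall A M B, ctypR L A M B -> ctypR L A (rename_c a b M) B).
Proof. revert L; apply typR_mutind; simpl; intros; econstructor; eauto. Qed.

Lemma typR_rename_inv a b :
  (forall V L T, vtypR L (rename_v a b V) T -> vtypR L V T) /\
  (forall M L A B, ctypR L A (rename_c a b M) B -> ctypR L A M B).
Proof.
  apply term_mutind; simpl; intros;
    match goal with H : _ |- _ => inversion H; subst end; econstructor; eauto.
Qed.

Lemma names_rename a b :
  (forall V, names_v (rename_v a b V) = map (ren a b) (names_v V)) /\
  (forall M, names_c (rename_c a b M) = map (ren a b) (names_c M)).
Proof. apply term_mutind; simpl; intros; rewrite ?map_app; congruence. Qed.

Lemma flat_map_names_rename a b mb :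
  flat_map names_v (map (rename_v a b) mb) = map (ren a b) (flat_map names_v mb).
Proof.
  induction mb as [| V mb IH]; simpl; auto.
  now rewrite map_app, IH, (proj1 (names_rename a b)).
Qed.

Lemma in_map_ren a b n l :
  In n (map (ren a b) l) <-> (n <> a /\ In n l) \/ (n = b /\ In a l).
Proof.
  rewrite in_map_iff; unfold ren; split.
  - intros [m [Hm Hin]]. destruct (Nat.eqb_spec m a); subst; auto.
  - intros [[Hn Hin] | [-> Hin]].
    + exists n. destruct (Nat.eqb_spec n a); tauto.
    + exists a. now rewrite Nat.eqb_refl.
Qed.

Lemma in_filter_neq n c l :
  In n (filter (fun x => negb (Nat.eqb x c)) l) <-> In n l /\ n <> c.
Proof. rewrite filter_In. destruct (Nat.eqb_spec n c); simpl; intuition congruence. Qed.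

Lemma fn_conf_all_names C n : In n (fn_conf C) -> In n (all_names C).
Proof.
  induction C; simpl; intros Hn; auto.
  - rewrite in_app_iff in *; tauto.
  - rewrite in_filter_neq in Hn; tauto.
Qed.

Lemma fn_conf_rename a b C : ~ In b (all_names C) -> forall n,
  In n (fn_conf (rename_conf a b C)) <->
  (n <> a /\ In n (fn_conf C)) \/ (n = b /\ In a (fn_conf C)).
Proof.
  induction C as [C1 IH1 C2 IH2 | c C IH | c M mb]; intros Hb n; simpl in Hb.
  - simpl. rewrite in_app_iff in Hb. rewrite !in_app_iff, IH1, IH2 by tauto. tauto.
  - simpl. destruct (Nat.eqb_spec c a) as [-> | Hca]; simpl; rewrite !in_filter_neq.
    + intuition.
    + rewrite IH by tauto. intuition congruence.
  - simpl fn_conf. rewrite <- in_map_ren. simpl.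
    now rewrite map_app, flat_map_names_rename, (proj2 (names_rename a b)).
Qed.

Fixpoint actors_typed (C : config) : Prop :=
  match C with
  | KPar C1 C2 => actors_typed C1 /\ actors_typed C2
  | KNu _ C' => actors_typed C'
  | KActor _ M _ => exists A, ctypR [] A M TUnit
  end.

Lemma actors_typed_rename a b C : actors_typed (rename_conf a b C) <-> actors_typed C.
Proof.
  induction C as [C1 IH1 C2 IH2 | c C IH | c M mb]; simpl.
  - tauto.
  - destruct (Nat.eqb c a); simpl; tauto.
  - split; intros [A HA]; exists A.
    + exact (proj2 (typR_rename_inv a b) M [] A TUnit HA).
    + exact (proj2 (typR_rename a b []) A M TUnit HA).
Qed.

Lemma scong_fn_conf C D : scong C D -> forall n, In n (fn_conf C) <-> In n (fn_conf D).
Proof.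
  induction 1 as [C | C D _ IH | C D E _ IH1 _ IH2 | C D | C D E | C D a Ha
                  | a b C Hb | C C' D _ IH | a C C' _ IH]; intro n; simpl; rewrite ?in_app_iff.
  - tauto.
  - now rewrite IH.
  - now rewrite IH1, IH2.
  - tauto.
  - tauto.
  - rewrite !in_filter_neq, in_app_iff. intuition congruence.
  - rewrite !in_filter_neq, fn_conf_rename by exact Hb. split.
    + intros [Hn Hne]. split; [left; auto |]. intros ->. now apply Hb, fn_conf_all_names.
    + intros [[[Hne Hn] | [Hnb _]] Hnb']; [auto | contradiction].
  - now rewrite IH.
  - now rewrite !in_filter_neq, IH.
Qed.

Lemma scong_actors_typed C D : scong C D -> actors_typed C <-> actors_typed D.
Proof.
  induction 1; simpl; try tauto.
  now rewrite actors_typed_rename.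
Qed.

Lemma ktyp_actors_typed G D C : ktyp G D C -> nenv_refs G -> actors_typed C.
Proof.
  induction 1 as [G D D1 D2 C1 C2 _ IH1 _ IH2 _ | G D a A C _ IH | G a A M mb _ HM _];
    simpl; intros HG.
  - auto.
  - apply IH. intros n T. unfold nupd. destruct (n =? a); [| apply HG].
    intros [= <-]; eauto.
  - exists A. exact (proj2 (typ_typR G [] HG) A M TUnit HM).
Qed.

Lemma ktyp_fn_conf G D C : ktyp G D C -> forall n, In n (fn_conf C) -> G n <> None.
Proof.
  induction 1 as [G D D1 D2 C1 C2 _ IH1 _ IH2 _ | G D a A C _ IH | G a A M mb Ha HM Hmb];
    simpl; intros n Hn.
  - rewrite in_app_iff in Hn; intuition eauto.
  - rewrite in_filter_neq in Hn. destruct Hn as [Hn Hne]. apply IH in Hn.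
    unfold nupd in Hn. now apply Nat.eqb_neq in Hne; rewrite Hne in Hn.
  - destruct Hn as [<- | Hn]; [congruence |]. rewrite in_app_iff, in_flat_map in Hn.
    destruct Hn as [Hn | [V [HV Hn]]].
    + exact (proj2 (typ_names G n []) A M TUnit HM Hn).
    + exact (proj1 (typ_names G n []) V A (Hmb V HV) Hn).
Qed.

Inductive redex : comp -> Prop :=
| rd_app : forall M V, redex (CApp (VLam M) V)
| rd_let : forall V N, redex (CLet (CRet V) N)
| rd_spawn : forall M, redex (CSpawn M)
| rd_send : forall V b, redex (CSend V (VName b))
| rd_recv : redex CRecv
| rd_self : redex CSelf.

Lemma vtypR_closed_fun V A C B : vtypR [] V (TFun A C B) -> exists M, V = VLam M.
Proof. inversion 1; [destruct n; discriminate | eauto]. Qed.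

Lemma vtypR_closed_ref V A : vtypR [] V (TRef A) -> exists a, V = VName a.
Proof. inversion 1; [destruct n; discriminate | eauto]. Qed.

Lemma ctypR_progress A M B : ctypR [] A M B ->
  (exists W, M = CRet W) \/ exists E R, M = plug E R /\ redex R.
Proof.
  remember [] as L eqn:HL.
  induction 1 as [? V W A C B HV _ | ? C M N A B _ IHM _ _ | ? C V A _
                  | ? C V W A _ HW | ? A | ? C M A _ _ | ? A]; subst;
    [right | right | left; eauto | right ..].
  - destruct (vtypR_closed_fun _ _ _ _ HV) as [M ->].
    exists EHole, (CApp (VLam M) W). split; [reflexivity | constructor].
  - destruct IHM as [[W ->] | [E [R [-> HR]]]]; [reflexivity | |].
    + exists EHole, (CLet (CRet W) N). split; [reflexivity | constructor].
    + exists (ELet E N), R. auto.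
  - destruct (vtypR_closed_ref _ _ HW) as [b ->].
    exists EHole, (CSend V (VName b)). split; [reflexivity | constructor].
  - exists EHole, CRecv. split; [reflexivity | constructor].
  - exists EHole, (CSpawn M). split; [reflexivity | constructor].
  - exists EHole, CSelf. split; [reflexivity | constructor].
Qed.

Definition irreducible (P : config) : Prop := forall P1 Q, scong P P1 -> ~ kstep0 P1 Q.

Definition actor_name (y : nat * comp * list val) : nat := fst (fst y).

Lemma sc_ctx_par_r C C' D : scong C C' -> scong (KPar D C) (KPar D C').
Proof.
  intro H. eapply sc_trans; [apply sc_comm |].
  eapply sc_trans; [apply sc_ctx_par, H | apply sc_comm].
Qed.

Lemma par_of_focus l x z : In z (x :: l) ->
  (l = [] /\ z = x) \/
  exists y l', scong (par_of x l) (KPar (actor_of z) (par_of y l')) /\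
    forall w, In w (x :: l) -> w = z \/ In w (y :: l').
Proof.
  revert x; induction l as [| y l IH]; intros x Hz.
  - left. destruct Hz as [<- | []]. auto.
  - right. destruct Hz as [<- | Hz].
    + exists y, l. split; [apply sc_refl |]. intros w [<- | Hw]; auto.
    + destruct (IH y Hz) as [[-> <-] | [y' [l' [Hsc Hin]]]].
      * exists x, []. split; [apply sc_comm |].
        intros w [<- | [<- | []]]; simpl; auto.
      * exists x, (y' :: l'). split.
        -- simpl. eapply sc_trans; [apply sc_ctx_par_r, Hsc |].
           eapply sc_trans; [apply sc_assoc |].
           eapply sc_trans; [apply sc_ctx_par, sc_comm | apply sc_sym, sc_assoc].
        -- intros w [<- | Hw]; [simpl; auto |].
           destruct (Hin w Hw); simpl; auto.
Qed.

Lemma irreducible_actor x l z D : irreducible (par_of x l) -> In z (x :: l) ->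
  ~ kstep0 (actor_of z) D.
Proof.
  intros Hirr Hz Hs. destruct (par_of_focus l x z Hz) as [[-> ->] | [y [l' [Hsc _]]]].
  - exact (Hirr _ _ (sc_refl _) Hs).
  - exact (Hirr _ _ Hsc (ks_ctx_par _ _ _ Hs)).
Qed.

Lemma irreducible_actor_pair x l z z' D : irreducible (par_of x l) ->
  In z (x :: l) -> In z' (x :: l) -> z <> z' ->
  ~ kstep0 (KPar (actor_of z) (actor_of z')) D.
Proof.
  intros Hirr Hz Hz' Hne Hs.
  destruct (par_of_focus l x z Hz) as [[-> ->] | [y [l' [Hsc Hin]]]].
  - destruct Hz' as [-> | []]. contradiction.
  - destruct (Hin z' Hz') as [-> | Hz'']; [contradiction |].
    destruct (par_of_focus l' y z' Hz'') as [[-> ->] | [y' [l'' [Hsc' _]]]].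
    + exact (Hirr _ _ Hsc Hs).
    + refine (Hirr _ _ _ (ks_ctx_par _ _ (par_of y' l'') Hs)).
      eapply sc_trans; [exact Hsc |].
      eapply sc_trans; [apply sc_ctx_par_r, Hsc' | apply sc_assoc].
Qed.

Lemma scong_nus ns P Q : scong P Q -> scong (nus ns P) (nus ns Q).
Proof. induction ns; simpl; auto using sc_ctx_nu. Qed.

Lemma kstep0_nus ns P Q : kstep0 P Q -> kstep0 (nus ns P) (nus ns Q).
Proof. induction ns; simpl; auto using ks_ctx_nu. Qed.

Lemma canon_irreducible C x l : (forall C', ~ kstep C C') -> scong C (canon x l) ->
  irreducible (par_of x l).
Proof.
  intros Hstuck Hsc P Q HP Hs. set (ns := map actor_name (x :: l)).
  apply (Hstuck (nus ns Q)). exists (nus ns P), (nus ns Q). split; [| split].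
  - exact (sc_trans _ _ _ Hsc (scong_nus ns _ _ HP)).
  - exact (kstep0_nus ns _ _ Hs).
  - apply sc_refl.
Qed.

Lemma fn_conf_nus ns P n : In n (fn_conf P) -> ~ In n ns -> In n (fn_conf (nus ns P)).
Proof.
  induction ns as [| c ns IH]; simpl; intros Hn Hns; rewrite ?in_filter_neq; auto.
  split; [apply IH | intros ->]; tauto.
Qed.

Lemma fn_conf_par_of l x z n : In z (x :: l) -> In n (fn_conf (actor_of z)) ->
  In n (fn_conf (par_of x l)).
Proof.
  revert x; induction l as [| y l IH]; simpl; intros x [<- | Hz] Hn;
    rewrite ?in_app_iff; try tauto.
  right. exact (IH _ Hz Hn).
Qed.

Lemma canon_closed_bound x l : (forall n, ~ In n (fn_conf (canon x l))) ->
  forall n, In n (fn_conf (par_of x l)) -> In n (map actor_name (x :: l)).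
Proof.
  intros Hclosed n Hn.
  destruct (in_dec Nat.eq_dec n (map actor_name (x :: l))) as [Hbound | Hfree]; auto.
  exfalso. exact (Hclosed n (fn_conf_nus _ _ _ Hn Hfree)).
Qed.

Lemma actors_typed_nus ns P : actors_typed (nus ns P) -> actors_typed P.
Proof. induction ns; simpl; auto. Qed.

Lemma actors_typed_par_of l x a M mb :
  actors_typed (par_of x l) -> In (a, M, mb) (x :: l) -> exists A, ctypR [] A M TUnit.
Proof.
  revert x; induction l as [| y l IH]; simpl; intros x Htyped [-> | Hz]; try tauto.
  exact (IH _ (proj2 Htyped) Hz).
Qed.

Lemma names_c_plug E R n : In n (names_c R) -> In n (names_c (plug E R)).
Proof. induction E; simpl; intros; auto using in_or_app. Qed.

Lemma list_max_succ_notin l : ~ In (S (list_max l)) l.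
Proof.
  intro Hin. pose proof (proj1 (list_max_le l (list_max l)) (le_n _)) as Hle.
  rewrite Forall_forall in Hle. apply Hle in Hin. lia.
Qed.

Lemma irreducible_redex_recv x l a E R mb : irreducible (par_of x l) ->
  (forall n, In n (fn_conf (par_of x l)) -> In n (map actor_name (x :: l))) ->
  In (a, plug E R, mb) (x :: l) -> redex R -> R = CRecv /\ mb = [].
Proof.
  intros Hirr Hbound Hin HR.
  assert (Hlocal : forall D, ~ kstep0 (KActor a (plug E R) mb) D)
    by exact (fun D => irreducible_actor x l _ D Hirr Hin).
  destruct HR as [M V | V N | M | V b | | ].
  - elim (Hlocal _ (ks_term _ _ _ _ (ms_ctx _ _ _ (ms_beta M V)))).
  - elim (Hlocal _ (ks_term _ _ _ _ (ms_ctx _ _ _ (ms_let V N)))).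
  - elim (Hlocal _ (ks_spawn a E M mb _ (list_max_succ_notin _))).
  - destruct (Nat.eq_dec b a) as [-> | Hba]; [elim (Hlocal _ (ks_send_self a E V mb)) |].
    assert (Hb : In b (map actor_name (x :: l))).
    { apply Hbound, (fn_conf_par_of _ _ _ _ Hin). right.
      apply in_or_app. left. apply names_c_plug. simpl. auto using in_or_app, in_eq. }
    apply in_map_iff in Hb. destruct Hb as [[[b' M'] mb'] [Hb' Hin']]; simpl in Hb'; subst b.
    assert (Hne : (a, plug E (CSend V (VName b')), mb) <> (b', M', mb'))
      by (intros [= Hab _ _]; auto).
    elim (irreducible_actor_pair x l _ _ _ Hirr Hin Hin' Hne (ks_send a E V b' mb M' mb')).
  - destruct mb as [| W mb]; [auto |]. elim (Hlocal _ (ks_recv a E W mb)).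
  - elim (Hlocal _ (ks_self a E mb)).
Qed.

Theorem theorem16 :
  forall (C : config),
    ktyp nempty [] C ->
    (forall C', ~ kstep C C') ->
    forall (x : nat * comp * list val) (l : list (nat * comp * list val)),
      scong C (canon x l) ->
      forall a M mb, In (a, M, mb) (x :: l) ->
        (exists W, M = CRet W) \/ (exists E, M = plug E CRecv /\ mb = []).
Proof.
  intros C HC Hstuck x l Hsc a M mb Hin.
  assert (Hclosed : forall n, ~ In n (fn_conf (canon x l))).
  { intros n Hn. apply (scong_fn_conf _ _ Hsc) in Hn.
    exact (ktyp_fn_conf _ _ _ HC n Hn eq_refl). }
  assert (Htyped : actors_typed (par_of x l)).
  { apply (actors_typed_nus (map actor_name (x :: l))), (scong_actors_typed _ _ Hsc).
    apply (ktyp_actors_typed _ _ _ HC). intros n T [=]. }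
  destruct (actors_typed_par_of _ _ _ _ _ Htyped Hin) as [A HA].
  destruct (ctypR_progress _ _ _ HA) as [Hval | [E [R [-> HR]]]]; [now left | right].
  exists E. destruct (irreducible_redex_recv x l a E R mb) as [-> ->]; auto.
  - exact (canon_irreducible C x l Hstuck Hsc).
  - exact (canon_closed_bound x l Hclosed).
Qed.
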